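(* Let $p,q\geq2$ be relatively prime integers with $p\geq 2q-1$. Then $|L(p,q)\cap D_{p,q}^n|\leq q^{n+1}$ for every integer $n>0$, where $D_{p,q}^n$ is the set of words of length $n$ over $D_{p,q}$.
   Context: For an integer $n>1$, $A_n=\{0,1,\dots,n-1\}$. For every $d\in A_q$ let $k_d\in A_p$ be the unique element with $k_dq\equiv d\pmod p$, and set $D_{p,q}=\{a\in A_{pq}\mid a\equiv k_d\pmod p\text{ for some }d\in A_q\}$. Define $g_{p,q}:A_{pq}\times A_{pq}\to A_{pq}$ by writing $x=x_1q+x_0$, $y=y_1q+y_0$ with $x_0,y_0\in A_q$, $x_1,y_1\in A_p$ (uniquely), and $g_{p,q}(x,y)=x_0p+y_1$; and $F_{p,q}:A_{pq}^{\mathbb{Z}}\to A_{pq}^{\mathbb{Z}}$ by $F_{p,q}(c)(i)=g_{p,q}(g_{p,q}(c(i-1),c(i)),g_{p,q}(c(i),c(i+1)))$. $F_{p,q}$ is a bijection with inverse $F_{q,p}$ (same formulas with $p,q$ exchanged), so $F_{p,q}^n$ is defined for $n\in\mathbb{Z}$. The trace is $\mathrm{tr}_{p,q}(c)=(F_{p,q}^n(c)(1))_{n\in\mathbb{Z}}$, and $L(p,q)$ is the set of all finite words $u(1)\cdots u(m)$ over $A_{pq}$ such that for some $c\in A_{pq}^{\mathbb{Z}}$ and $n_0\in\mathbb{Z}$, $u(j)=\mathrm{tr}_{p,q}(c)(n_0+j)$ for $1\leq j\leq m$. *)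

From mathcomp Require Import all_boot all_order all_algebra.
From mathcomp Require Import boolp.
Set Implicit Arguments. Unset Strict Implicit. Unset Printing Implicit Defensive.
Import GRing.Theory Num.Theory.
Local Open Scope ring_scope.

(* Elements of A_{pq} are represented as natural numbers; configurations
   c : Z -> A_{pq} are functions int -> nat with all values < p*q. *)

Definition g (p q : nat) (x y : nat) : nat := ((x %% q) * p + y %/ q)%N.

Definition F (p q : nat) (c : int -> nat) : int -> nat :=
  fun i => g p q (g p q (c (i - 1)) (c i)) (g p q (c i) (c (i + 1))).

(* F_{p,q}^n for n in Z; negative powers use the inverse F_{q,p}. *)
Definition Fpow (p q : nat) (n : int) (c : int -> nat) : int -> nat :=
  match n with
  | Posz k => iter k (F p q) c
  | Negz k => iter k.+1 (F q p) c
  end.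

Definition tr (p q : nat) (c : int -> nat) (n : int) : nat := Fpow p q n c 1.

Definition inL (p q : nat) (u : seq nat) : Prop :=
  exists c : int -> nat, (forall i, (c i < p * q)%N) /\
  exists n0 : int, forall j : nat, (j < size u)%N ->
    nth 0%N u j = tr p q c (n0 + (j.+1)%:Z).

Definition inD (p q : nat) (a : nat) : bool :=
  [exists d : 'I_q, exists k : 'I_p,
     ((k * q == d %[mod p]) && (a == k %[mod p]))%N].

From mathcomp Require Import all_boot all_order all_algebra.
From mathcomp Require Import boolp.
From mathcomp Require Import zify.

(* A letter a in D is determined by its quotient a %/ p and its key
   ((a %% p) * q) %/ p < q: if (a %% p) * q = m * p + d with d < q, then a %% p
   is the unique k < p with k * q in [m * p, m * p + q).  Since
   F(c)(i) %% p = ((c(i) %% q) * p + c(i+1) %/ q) %/ q, the bound p >= 2q - 1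
   forces the key of every letter of a trace in D to be the previous letter
   modulo q.  A word of L(p,q) over D is therefore determined by the key of its
   first letter and the quotients of its n letters by p: q^(n+1) choices. *)

Definition bounded (p q : nat) (c : int -> nat) : Prop := forall i, c i < p * q.

Lemma boundedC p q c : bounded q p c = bounded p q c.
Proof. by rewrite /bounded mulnC. Qed.

Lemma g_lt p q x y : 0 < q -> y < p * q -> g p q x y < p * q.
Proof.
move=> q_gt0 y_lt; rewrite /g.
have := ltn_pmod x q_gt0; have : y %/ q < p by rewrite ltn_divLR.
nia.
Qed.

Lemma g_gK p q w x y : 0 < p -> 0 < q -> x < p * q -> y < p * q ->
  g p q (g q p w x) (g q p x y) = x.
Proof.
move=> p_gt0 q_gt0 x_lt y_lt; rewrite /g.
have x_lt' : x %/ p < q by rewrite ltn_divLR // mulnC.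
have y_lt' : y %/ p < q by rewrite ltn_divLR // mulnC.
rewrite mulnC modnMDl (modn_small x_lt') divnMDl // (divn_small y_lt') addn0.
by rewrite mulnC -divn_eq.
Qed.

Lemma F_bounded p q c : 0 < q -> bounded p q c -> bounded p q (F p q c).
Proof. by move=> q_gt0 c_lt i; rewrite /F; apply: g_lt => //; apply: g_lt. Qed.

Lemma FK p q c : 0 < p -> 0 < q -> bounded p q c -> F p q (F q p c) =1 c.
Proof.
move=> p_gt0 q_gt0 c_lt i.
have g_lt' x y : y < p * q -> g q p x y < p * q.
  by rewrite (mulnC p); apply: g_lt.
by rewrite /F GRing.subrK GRing.addrK !g_gK //; apply: g_lt'.
Qed.

Lemma Fpow_bounded p q c m : 0 < p -> 0 < q ->
  bounded p q c -> bounded p q (Fpow p q m c).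
Proof.
move=> p_gt0 q_gt0 c_lt; case: m => k /=; elim: k => [|k IH] /=.
- exact: c_lt.
- exact: F_bounded.
- by rewrite -boundedC; apply: F_bounded; rewrite // boundedC.
- by rewrite -boundedC; apply: F_bounded; rewrite // boundedC.
Qed.

Lemma FpowSr p q c m : 0 < p -> 0 < q -> bounded p q c ->
  Fpow p q (m + 1)%R c =1 F p q (Fpow p q m c).
Proof.
move=> p_gt0 q_gt0 c_lt i; case: m => [k|[|k]].
- by rewrite -[(Posz k + 1)%R]/(Posz (k + 1)) addn1.
- by rewrite /= FK.
- have -> : (Negz k.+1 + 1 = Negz k)%R by lia.
  by rewrite /= FK //; exact: (Fpow_bounded _ _ _ (Negz k)).
Qed.

Definition key (p q a : nat) : nat := (a %% p) * q %/ p.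

Section DigitKey.

Variables p q : nat.
Hypotheses (p_gt0 : 0 < p) (q_gt0 : 0 < q) (q_le_p : q <= p).

Lemma key_lt a : key p q a < q.
Proof. by rewrite /key ltn_divLR // mulnC ltn_pmul2l ?ltn_pmod. Qed.

Lemma inD_key_mod a : inD p q a -> (a %% p) * q %% p < q.
Proof.
case/existsP=> d /existsP[k /andP[/eqP kqE /eqP aE]].
rewrite aE (modn_small (ltn_ord k)) kqE modn_small //.
exact: leq_trans (ltn_ord d) q_le_p.
Qed.

Lemma mul_div_mod_leq x y : x * q %/ p = y * q %/ p ->
  x * q %% p < q -> x <= y.
Proof.
move=> divE x_lt; rewrite -ltnS -(ltn_pmul2r q_gt0) mulSn.
rewrite (divn_eq (x * q) p) (divn_eq (y * q) p) divE.
by rewrite addnCA ltn_add2l ltn_addr.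
Qed.

Lemma inD_inj a b : inD p q a -> inD p q b ->
  key p q a = key p q b -> a %/ p = b %/ p -> a = b.
Proof.
move=> /inD_key_mod a_lt /inD_key_mod b_lt keyE divE.
rewrite (divn_eq a p) (divn_eq b p) divE; congr (_ + _).
by apply/anti_leq/andP; split; apply: mul_div_mod_leq.
Qed.

Definition trace_step : rel nat := fun a b => key p q b == a %% q.

Lemma path_inj a s t : all (inD p q) s -> all (inD p q) t ->
  path trace_step a s -> path trace_step a t ->
  map (divn^~ p) s = map (divn^~ p) t -> s = t.
Proof.
elim: s a t => [|x s IH] a [|y t] //= /andP[xD sD] /andP[yD tD].
move=> /andP[/eqP x_key x_path] /andP[/eqP y_key y_path] [xy_div st_div].
have xy : x = y by apply: inD_inj => //; rewrite x_key y_key.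
by rewrite -xy in y_path *; rewrite (IH x t).
Qed.

Definition code (s : seq nat) : seq nat :=
  key p q (head 0 s) :: map (divn^~ p) s.

Lemma code_inj s t : all (inD p q) s -> all (inD p q) t ->
  sorted trace_step s -> sorted trace_step t -> code s = code t -> s = t.
Proof.
case: s t => [|x s] [|y t] //=; try by move=> _ _ _ _ /(congr1 size).
move=> /andP[xD sD] /andP[yD tD] x_path y_path [xy_key xy_div st_div].
have xy : x = y by apply: inD_inj.
by rewrite -xy in y_path *; rewrite (path_inj _ _ _ sD tD x_path y_path).
Qed.

Lemma nth_code_lt s i : all (fun a => a < p * q) s -> nth 0 (code s) i < q.
Proof.
move=> s_lt; case: i => [|i] /=; first exact: key_lt.
have [i_lt|i_ge] := ltnP i (size s); last by rewrite nth_default ?size_map.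
by rewrite (nth_map 0) // ltn_divLR // mulnC (all_nthP 0 s_lt).
Qed.

End DigitKey.

Section TraceKey.

Variables p q : nat.
Hypotheses (p_gt0 : 0 < p) (q_gt0 : 0 < q) (le_2q1_p : 2 * q - 1 <= p).

Let q_le_p : q <= p. Proof. lia. Qed.

(* This is where p >= 2q - 1 is needed. *)
Lemma rounddown_mul_div a t : t < p -> (a * p + t) %/ q * q %% p < q ->
  (a * p + t) %/ q * q %/ p = a.
Proof.
move=> t_lt; set k := (a * p + t) %/ q; set m := k * q %/ p => d_lt.
have kqE := divn_eq (k * q) p; have apE := divn_eq (a * p + t) q.
have r_lt := ltn_pmod (a * p + t) q_gt0.
rewrite -/k -/m in kqE apE r_lt d_lt.
apply/anti_leq/andP; split; rewrite -ltnS -(ltn_pmul2r p_gt0) mulSn; lia.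
Qed.

Lemma key_F c i : bounded p q c ->
  inD p q (F p q c i) -> key p q (F p q c i) = c i %% q.
Proof.
move=> c_lt; have t_lt : c (i + 1)%R %/ q < p by rewrite ltn_divLR.
have Fmod : F p q c i %% p = (c i %% q * p + c (i + 1)%R %/ q) %/ q.
  by rewrite /F {1}/g modnMDl modn_small // ltn_divLR // g_lt.
move=> /(inD_key_mod _ _ q_le_p); rewrite /key Fmod.
exact: rounddown_mul_div.
Qed.

Lemma key_trS c m : bounded p q c ->
  inD p q (tr p q c (m + 1)) -> key p q (tr p q c (m + 1)) = tr p q c m %% q.
Proof.
move=> c_lt; rewrite /tr FpowSr //.
by apply: key_F; apply: Fpow_bounded.
Qed.

Lemma inL_sorted u : inL p q u -> all (inD p q) u -> sorted (trace_step p q) u.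
Proof.
case=> c [c_lt [n0 u_tr]] uD; apply/(sortedP 0) => j j_lt.
have j_lt' : j < size u by apply: ltnW.
have succE : (n0 + j.+2%:Z = n0 + j.+1%:Z + 1)%R by lia.
rewrite /trace_step (u_tr j.+1) // u_tr // succE; apply/eqP/key_trS => //.
by rewrite -succE -u_tr //; apply: (all_nthP 0 uD).
Qed.

End TraceKey.

Theorem lemma6 (p q : nat) (hp : 2 <= p) (hq : 2 <= q) (hcop : coprime p q)
  (hpq : 2 * q - 1 <= p) (n : nat) (hn : 0 < n) :
  #|[set u : n.-tuple 'I_(p * q) |
      all (fun a : 'I_(p * q) => inD p q a) u &&
      `[< inL p q (map (fun a : 'I_(p * q) => nat_of_ord a) u) >] ]| <= q ^ n.+1.
Proof.
have p_gt0 : 0 < p by lia.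
have q_gt0 : 0 < q by lia.
have q_le_p : q <= p by lia.
set S := [set u | _].
pose word (u : n.-tuple 'I_(p * q)) := map (@nat_of_ord _) u.
pose phi u : {ffun 'I_n.+1 -> 'I_q} :=
  [ffun i : 'I_n.+1 => insubd (Ordinal q_gt0) (nth 0 (code p q (word u)) i)].
suff phi_inj : {in S &, injective phi}.
  rewrite -(card_in_imset phi_inj); apply: leq_trans (max_card _) _.
  by rewrite card_ffun !card_ord.
move=> u v; rewrite !inE => /andP[uD /asboolP uL] /andP[vD /asboolP vL].
move=> /ffunP phiE.
have codeE : code p q (word u) = code p q (word v).
  apply: (@eq_from_nth _ 0); first by rewrite /= !size_map !size_tuple.
  move=> i; rewrite /= size_map size_tuple => i_lt.
  have := congr1 val (phiE (Ordinal i_lt)).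
  have word_lt w : all (fun a => a < p * q) (word w).
    by rewrite all_map; apply/allP=> a _; apply: ltn_ord.
  by rewrite !ffunE !insubdK // !unfold_in nth_code_lt.
have uD' : all (inD p q) (word u) by rewrite all_map.
have vD' : all (inD p q) (word v) by rewrite all_map.
have wordE : word u = word v.
  by apply: (code_inj _ _ q_gt0 q_le_p _ _ uD' vD') codeE; apply: inL_sorted.
exact/val_inj/(inj_map val_inj).
Qed.
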